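(* Let $K_1=\overline{1}$ and, for $j\ge1$, let $K_{j+1}$ be the periodic sequence whose repeating block is obtained by writing the repeating block of $K_j$ twice and replacing the last symbol by its complement. For $s=s_1s_2\dots\in\{0,1\}^{\mathbb N}$ let $\tau(s)=\sum_{k\ge1}t_k2^{-k}$ with $t_k=\sum_{i=1}^k s_i\pmod 2$, and put $\tau_j=\tau(K_j)$. Then for every $j\ge1$, $$\tau_j=\frac{p_j}{q_j},\qquad q_j=2^{2^{j-1}}+1,\qquad p_j=2^{2^{j-1}}+1-\prod_{k=0}^{j-2}\bigl(2^{2^k}-1\bigr),$$ this fraction is in lowest terms, and equivalently $$\tau_j=1-\frac{\prod_{k=0}^{j-2}(2^{2^k}-1)}{2^{2^{j-1}}+1}=1-\frac{\prod_{k=0}^{j-1}(1-2^{-2^k})}{2(1-2^{-2^j})}.$$ Moreover $p_1=2,q_1=3$ and $p_{j+1}=2+(2^{2^{j-1}}-1)p_j$, $q_{j+1}=2+(2^{2^{j-1}}-1)q_j$ for $j\ge1$.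
   Context: The empty product equals $1$. For example $\tau_1=2/3$, $\tau_2=4/5$, $\tau_3=14/17$, $\tau_4=212/257$. *)

From Stdlib Require Import Reals ZArith List Bool.
From Coquelicot Require Import Coquelicot.
Import ListNotations.

(* Repeating block of K_j (j >= 1): K_1 = [1], K_{j+1} = block of K_j written
   twice with its last symbol complemented.  true = 1, false = 0. *)
Fixpoint block_aux (n : nat) : list bool :=
  match n with
  | O => [true]
  | S m => let b := block_aux m ++ block_aux m in
           removelast b ++ [negb (last b false)]
  end.

Definition block (j : nat) : list bool := block_aux (j - 1).

(* K_j as a sequence s_1 s_2 ... ; index i >= 1 (s 0 is unused) *)
Definition Kseq (j : nat) (i : nat) : bool :=
  nth ((i - 1) mod length (block j)) (block j) false.

Fixpoint parity (s : nat -> bool) (k : nat) : bool :=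
  match k with
  | O => false
  | S m => xorb (parity s m) (s (S m))
  end.

Definition b2R (b : bool) : R := if b then 1%R else 0%R.

Definition tau (s : nat -> bool) : R :=
  Series (fun n => b2R (parity s (S n)) / 2 ^ (S n)).

Definition tau_j (j : nat) : R := tau (Kseq j).

Definition prodZ (j : nat) : Z :=
  fold_right Z.mul 1%Z
    (map (fun k => (2 ^ (2 ^ Z.of_nat k)) - 1)%Z (seq 0 (j - 1))).

Definition qZ (j : nat) : Z := (2 ^ (2 ^ Z.of_nat (j - 1)) + 1)%Z.
Definition pZ (j : nat) : Z := (qZ j - prodZ j)%Z.

Definition prodR (j : nat) : R :=
  fold_right Rmult 1%R (map (fun k => 1 - / 2 ^ (2 ^ k))%R (seq 0 j)).

(* If s is periodic with a block b of length L containing an odd number of ones,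
   then the parity digits t_k of the second period are the complements of those
   of the first, so tau(s) = A + (1 - tau(s)) / 2^L, where A is the value of the
   first L digits; hence tau(s) = (A + 2^-L) / (1 + 2^-L).  The block of K_(m+1)
   has length 2^m and odd weight, and doubling a block with its last symbol
   flipped multiplies 1 - A by 1 - 2^-L; thus 1 - A = prod_(k<m) (1 - 2^-2^k) / 2,
   which gives the closed forms.  The fraction is reduced because each
   2^2^k - 1 with k < m divides 2^2^m - 1 = q - 2 while q is odd. *)

From Stdlib Require Import Reals ZArith List Lra Lia Znumtheory Bool.
From Coquelicot Require Import Coquelicot.
Import ListNotations.
Open Scope R_scope.

Lemma b2R_negb (b : bool) : b2R (negb b) = 1 - b2R b.
Proof. destruct b; simpl; lra. Qed.

Definition binary_value (d : nat -> bool) : R :=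
  Series (fun n => b2R (d n) / 2 ^ S n).

Lemma is_series_inv_pow2 : is_series (fun n => / 2 ^ S n) 1.
Proof.
  assert (Hgeom : is_series (fun n => (/ 2) ^ n) (/ (1 - / 2))).
  { apply is_series_geom. rewrite Rabs_pos_eq; lra. }
  apply (is_series_scal_l (/ 2)) in Hgeom.
  replace 1 with (scal (/ 2) (/ (1 - / 2))) by (unfold scal; simpl; unfold mult; simpl; field).
  eapply is_series_ext; [|exact Hgeom]. intro n.
  unfold scal; simpl; unfold mult; simpl.
  now rewrite pow_inv, <- Rinv_mult.
Qed.

Lemma ex_series_binary (d : nat -> bool) : ex_series (fun n => b2R (d n) / 2 ^ S n).
Proof.
  apply (@ex_series_le R_AbsRing R_CompleteNormedModule _ (fun n => / 2 ^ S n)).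
  - intro n. change (norm _) with (Rabs (b2R (d n) / 2 ^ S n)).
    assert (0 < / 2 ^ S n) by (apply Rinv_0_lt_compat, pow_lt; lra).
    destruct (d n); simpl b2R; rewrite Rabs_pos_eq; lra.
  - eexists. apply is_series_inv_pow2.
Qed.

Lemma binary_value_ext (d d' : nat -> bool) :
  (forall n, d n = d' n) -> binary_value d = binary_value d'.
Proof. intro Hd. apply Series_ext. intro n. now rewrite Hd. Qed.

Lemma binary_value_cons (d : nat -> bool) :
  binary_value d = b2R (d 0%nat) / 2 + binary_value (fun n => d (S n)) / 2.
Proof.
  unfold binary_value. rewrite Series_incr_1 by apply ex_series_binary.
  rewrite (Series_ext _ (fun n => / 2 * (b2R (d (S n)) / 2 ^ S n))).
  - rewrite Series_scal_l. simpl. field.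
  - intro n. simpl. field. apply pow_nonzero. lra.
Qed.

Lemma binary_value_negb (d : nat -> bool) :
  binary_value (fun n => negb (d n)) = 1 - binary_value d.
Proof.
  unfold binary_value.
  rewrite (Series_ext _ (fun n => / 2 ^ S n - b2R (d n) / 2 ^ S n)).
  - rewrite Series_minus by (apply ex_series_binary || (eexists; apply is_series_inv_pow2)).
    now rewrite (is_series_unique _ _ is_series_inv_pow2).
  - intro n. rewrite b2R_negb. field. apply pow_nonzero. lra.
Qed.

(* The value of the parity digits read along [b] when the parity accumulated
   before [b] is [c]. *)
Fixpoint block_value (b : list bool) (c : bool) : R :=
  match b with
  | [] => 0
  | x :: b' => b2R (xorb c x) / 2 + block_value b' (xorb c x) / 2
  end.

Lemma block_value_app (b1 b2 : list bool) (c : bool) :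
  block_value (b1 ++ b2) c
  = block_value b1 c + block_value b2 (fold_left xorb b1 c) / 2 ^ length b1.
Proof.
  revert c. induction b1 as [|x b1 IH]; intro c; simpl.
  - field.
  - rewrite IH. field. apply pow_nonzero. lra.
Qed.

Lemma block_value_negb (b : list bool) (c : bool) :
  block_value b (negb c) = 1 - / 2 ^ length b - block_value b c.
Proof.
  revert c. induction b as [|x b IH]; intro c; simpl.
  - field.
  - rewrite <- negb_xorb_l, IH, b2R_negb. field. apply pow_nonzero. lra.
Qed.

Lemma fold_left_xorb (b : list bool) (c : bool) :
  fold_left xorb b c = xorb c (fold_left xorb b false).
Proof.
  revert c. induction b as [|x b IH]; intro c; simpl.
  - now rewrite xorb_false_r.
  - rewrite IH, (IH x). now rewrite xorb_assoc.
Qed.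

Definition tau_from (s : nat -> bool) (o : nat) : R :=
  binary_value (fun n => parity s (o + S n)).

Lemma parity_prefix (s : nat -> bool) (b : list bool) (o : nat) :
  (forall i, (i < length b)%nat -> s (S (o + i)) = nth i b false) ->
  parity s (o + length b) = fold_left xorb b (parity s o).
Proof.
  revert o. induction b as [|x b' IH]; intros o Hs; simpl.
  - now rewrite Nat.add_0_r.
  - rewrite <- plus_n_Sm, <- plus_Sn_m, IH.
    + simpl. rewrite <- (Nat.add_0_r o) at 2. now rewrite (Hs 0%nat) by (simpl; lia).
    + intros i Hi. rewrite plus_Sn_m, plus_n_Sm. apply (Hs (S i)). simpl. lia.
Qed.

Lemma tau_from_S (s : nat -> bool) (o : nat) :
  tau_from s o = b2R (parity s (S o)) / 2 + tau_from s (S o) / 2.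
Proof.
  unfold tau_from. rewrite binary_value_cons, Nat.add_1_r. f_equal. f_equal.
  apply binary_value_ext. intro n. f_equal. lia.
Qed.

Lemma tau_from_prefix (s : nat -> bool) (b : list bool) (o : nat) :
  (forall i, (i < length b)%nat -> s (S (o + i)) = nth i b false) ->
  tau_from s o = block_value b (parity s o) + tau_from s (o + length b) / 2 ^ length b.
Proof.
  revert o. induction b as [|x b' IH]; intros o Hs; simpl.
  - rewrite Nat.add_0_r. field.
  - assert (Hx : parity s (S o) = xorb (parity s o) x).
    { simpl. rewrite <- (Nat.add_0_r o) at 2. now rewrite (Hs 0%nat) by (simpl; lia). }
    rewrite tau_from_S, IH, Hx, <- plus_n_Sm.
    + simpl. field. apply pow_nonzero. lra.
    + intros i Hi. rewrite plus_Sn_m, plus_n_Sm. apply (Hs (S i)). simpl. lia.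
Qed.

Section PeriodicSequence.

Variables (s : nat -> bool) (b : list bool).
Hypothesis s_periodic : forall i, s (S i) = nth (i mod length b) b false.
Hypothesis parity_block : fold_left xorb b false = true.

Lemma periodic_prefix : forall i, (i < length b)%nat -> s (S (0 + i)) = nth i b false.
Proof. intros i Hi. now rewrite s_periodic, Nat.mod_small. Qed.

Lemma parity_add_period (k : nat) : parity s (k + length b) = negb (parity s k).
Proof.
  induction k as [|k IH].
  - exact (eq_trans (parity_prefix s b 0 periodic_prefix) parity_block).
  - simpl. rewrite IH, negb_xorb_l. f_equal.
    rewrite !s_periodic. f_equal.
    rewrite <- (Nat.mul_1_l (length b)) at 1. apply Nat.Div0.mod_add.
Qed.

Lemma tau_from_period : tau_from s (length b) = 1 - tau_from s 0.
Proof.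
  unfold tau_from. rewrite <- binary_value_negb. apply binary_value_ext. intro n.
  now rewrite Nat.add_comm, parity_add_period.
Qed.

Lemma tau_periodic :
  tau s = (block_value b false + / 2 ^ length b) / (1 + / 2 ^ length b).
Proof.
  change (tau s) with (tau_from s 0).
  pose proof (tau_from_prefix s b 0 periodic_prefix) as Hprefix.
  simpl in Hprefix. rewrite tau_from_period in Hprefix. unfold Rdiv in Hprefix.
  set (T := tau_from s 0) in *. set (u := / 2 ^ length b) in *.
  assert (0 < u) by (apply Rinv_0_lt_compat, pow_lt; lra).
  assert (Hfix : T * (1 + u) = block_value b false + u) by nra.
  rewrite <- Hfix. field. lra.
Qed.

End PeriodicSequence.

Definition double_flip (B : list bool) : list bool :=
  let b := B ++ B in removelast b ++ [negb (last b false)].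

Lemma block_aux_S (m : nat) : block_aux (S m) = double_flip (block_aux m).
Proof. reflexivity. Qed.

Lemma double_flip_snoc (B : list bool) (x : bool) :
  double_flip (B ++ [x]) = B ++ [x] ++ B ++ [negb x].
Proof.
  unfold double_flip.
  replace ((B ++ [x]) ++ B ++ [x]) with (((B ++ [x]) ++ B) ++ [x])
    by now rewrite <- !app_assoc.
  now rewrite removelast_last, last_last, <- !app_assoc.
Qed.

Lemma parity_double_flip (B : list bool) (x : bool) :
  fold_left xorb (double_flip (B ++ [x])) false = true.
Proof.
  rewrite double_flip_snoc, !fold_left_app. simpl.
  rewrite (fold_left_xorb B). destruct x, (fold_left xorb B false); reflexivity.
Qed.

Lemma block_value_double_flip (B : list bool) (x : bool) :
  fold_left xorb (B ++ [x]) false = true ->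
  1 - block_value (double_flip (B ++ [x])) false
  = (1 - block_value (B ++ [x]) false) * (1 - / 2 ^ length (B ++ [x])).
Proof.
  intro Hparity.
  rewrite double_flip_snoc, app_assoc, (block_value_app (B ++ [x])), Hparity.
  change true with (negb false). rewrite block_value_negb, !block_value_app, !length_app.
  rewrite fold_left_app in Hparity. simpl in *. rewrite pow_add, pow_1.
  destruct x, (fold_left xorb B false); try discriminate; simpl; field;
    apply pow_nonzero; lra.
Qed.

Lemma block_aux_snoc (m : nat) : exists B x, block_aux m = B ++ [x].
Proof.
  destruct m as [|m].
  - now exists [], true.
  - destruct (exists_last (l := block_aux (S m))) as [B [x HB]].
    + rewrite block_aux_S. unfold double_flip. now destruct (removelast _).
    + now exists B, x.
Qed.

Lemma length_block_aux (m : nat) : length (block_aux m) = (2 ^ m)%nat.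
Proof.
  induction m as [|m IH]; [reflexivity|].
  destruct (block_aux_snoc m) as [B [x HB]].
  rewrite block_aux_S, HB, double_flip_snoc. rewrite HB, length_app in IH.
  rewrite !length_app. simpl in *. lia.
Qed.

Lemma parity_block_aux (m : nat) : fold_left xorb (block_aux m) false = true.
Proof.
  destruct m as [|m]; [reflexivity|].
  destruct (block_aux_snoc m) as [B [x HB]].
  rewrite block_aux_S, HB. apply parity_double_flip.
Qed.

Lemma fold_right_Rmult_snoc (l : list R) (x : R) :
  fold_right Rmult 1 (l ++ [x]) = fold_right Rmult 1 l * x.
Proof.
  induction l as [|y l IH]; cbn [fold_right app].
  - ring.
  - rewrite IH. ring.
Qed.

Lemma prodR_S (m : nat) : prodR (S m) = prodR m * (1 - / 2 ^ 2 ^ m).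
Proof. unfold prodR. rewrite seq_S, map_app. cbn [map]. now rewrite fold_right_Rmult_snoc. Qed.

Lemma block_value_block_aux (m : nat) : 1 - block_value (block_aux m) false = prodR m / 2.
Proof.
  induction m as [|m IH].
  - unfold prodR. simpl. field.
  - destruct (block_aux_snoc m) as [B [x HB]].
    rewrite block_aux_S, HB, block_value_double_flip by (rewrite <- HB; apply parity_block_aux).
    rewrite <- HB, IH, length_block_aux, prodR_S. field. apply pow_nonzero. lra.
Qed.

Lemma tau_j_S (m : nat) :
  tau_j (S m) = 1 - 2 ^ 2 ^ m * prodR m / 2 / (2 ^ 2 ^ m + 1).
Proof.
  unfold tau_j. rewrite (tau_periodic _ (block_aux m)).
  - rewrite length_block_aux.
    replace (block_value (block_aux m) false) with (1 - prodR m / 2)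
      by (rewrite <- block_value_block_aux; ring).
    assert (0 < 2 ^ 2 ^ m) by (apply pow_lt; lra).
    field. lra.
  - intro i. unfold Kseq, block. now replace (S m - 1)%nat with m by lia;
      replace (S i - 1)%nat with i by lia.
  - apply parity_block_aux.
Qed.

Lemma pow2_pow2_S (m : nat) : 2 ^ 2 ^ S m = 2 ^ 2 ^ m * 2 ^ 2 ^ m.
Proof. rewrite <- pow_add. f_equal. simpl. lia. Qed.

Lemma tau_j_prodR (m : nat) :
  tau_j (S m) = 1 - prodR (S m) / (2 * (1 - / 2 ^ 2 ^ S m)).
Proof.
  rewrite tau_j_S, prodR_S, pow2_pow2_S.
  assert (2 <= 2 ^ 2 ^ m).
  { rewrite <- (pow_1 2) at 1. apply Rle_pow; [lra|].
    pose proof (Nat.pow_nonzero 2 m). lia. }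
  field. repeat split; nra.
Qed.

Open Scope Z_scope.

Lemma Z_pow2_pow2_S (m : nat) :
  2 ^ 2 ^ Z.of_nat (S m) = 2 ^ 2 ^ Z.of_nat m * 2 ^ 2 ^ Z.of_nat m.
Proof.
  assert (0 <= 2 ^ Z.of_nat m) by (apply Z.pow_nonneg; lia).
  rewrite Nat2Z.inj_succ, Z.pow_succ_r, Z.mul_comm, Z.pow_mul_r, Z.pow_2_r; lia.
Qed.

Lemma IZR_pow2_pow2 (m : nat) : IZR (2 ^ 2 ^ Z.of_nat m) = (2 ^ 2 ^ m)%R.
Proof.
  replace (2 ^ Z.of_nat m) with (Z.of_nat (2 ^ m)) by now rewrite Nat2Z.inj_pow.
  now rewrite <- pow_IZR.
Qed.

Lemma qZ_S (m : nat) : qZ (S m) = 2 ^ 2 ^ Z.of_nat m + 1.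
Proof. unfold qZ. now replace (S m - 1)%nat with m by lia. Qed.

Lemma fold_right_Zmul_snoc (l : list Z) (x : Z) :
  fold_right Z.mul 1 (l ++ [x]) = fold_right Z.mul 1 l * x.
Proof.
  induction l as [|y l IH]; cbn [fold_right app].
  - ring.
  - rewrite IH. ring.
Qed.

Lemma prodZ_S (m : nat) : prodZ (S (S m)) = prodZ (S m) * (2 ^ 2 ^ Z.of_nat m - 1).
Proof.
  unfold prodZ. replace (S (S m) - 1)%nat with (S m) by lia.
  replace (S m - 1)%nat with m by lia.
  rewrite seq_S, map_app. cbn [map]. now rewrite fold_right_Zmul_snoc.
Qed.

Lemma IZR_prodZ (m : nat) : IZR (prodZ (S m)) = (2 ^ 2 ^ m * prodR m / 2)%R.
Proof.
  induction m as [|m IH].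
  - unfold prodR, prodZ. simpl. field.
  - rewrite prodZ_S, mult_IZR, minus_IZR, IZR_pow2_pow2, IH, prodR_S, pow2_pow2_S.
    field. apply pow_nonzero. lra.
Qed.

Lemma tau_j_prodZ (m : nat) :
  tau_j (S m) = (1 - IZR (prodZ (S m)) / IZR (qZ (S m)))%R.
Proof. now rewrite tau_j_S, IZR_prodZ, qZ_S, plus_IZR, IZR_pow2_pow2. Qed.

Lemma tau_j_pZ (m : nat) : tau_j (S m) = (IZR (pZ (S m)) / IZR (qZ (S m)))%R.
Proof.
  rewrite tau_j_prodZ. unfold pZ. rewrite minus_IZR. field.
  rewrite qZ_S, plus_IZR, IZR_pow2_pow2.
  assert (0 < 2 ^ 2 ^ m)%R by (apply pow_lt; lra). lra.
Qed.

Lemma pow2_pow2_sub1_divide (k m : nat) :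
  (k <= m)%nat -> (2 ^ 2 ^ Z.of_nat k - 1 | 2 ^ 2 ^ Z.of_nat m - 1).
Proof.
  induction 1 as [|m _ IH]; [apply Z.divide_refl|].
  apply (Z.divide_trans _ _ _ IH).
  exists (2 ^ 2 ^ Z.of_nat m + 1). rewrite Z_pow2_pow2_S. ring.
Qed.

Lemma rel_prime_pow2_pow2_sub1_qZ (k m : nat) :
  (k <= m)%nat -> rel_prime (2 ^ 2 ^ Z.of_nat k - 1) (qZ (S m)).
Proof.
  intro Hkm. destruct (pow2_pow2_sub1_divide k m Hkm) as [t Ht].
  rewrite qZ_S. apply bezout_rel_prime.
  assert (Hpos : 0 < 2 ^ Z.of_nat m) by (apply Z.pow_pos_nonneg; lia).
  set (u := 2 ^ (2 ^ Z.of_nat m - 1)).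
  assert (Hu : 2 ^ 2 ^ Z.of_nat m = 2 * u).
  { unfold u. rewrite <- Z.pow_succ_r by lia. f_equal. lia. }
  (* [t * (2 ^ 2 ^ k - 1) = 2 u - 1] while [qZ (S m) = 2 u + 1]. *)
  apply Bezout_intro with (u := u * t) (v := 1 - u).
  rewrite Hu in *. nia.
Qed.

Lemma rel_prime_fold_mul (l : list Z) (n : Z) :
  (forall x, In x l -> rel_prime x n) -> rel_prime (fold_right Z.mul 1 l) n.
Proof.
  induction l as [|x l IH]; intro Hl; simpl.
  - apply rel_prime_1.
  - apply rel_prime_sym, rel_prime_mult; apply rel_prime_sym.
    + apply Hl. now left.
    + apply IH. intros y Hy. apply Hl. now right.
Qed.

Lemma rel_prime_prodZ_qZ (m : nat) : rel_prime (prodZ (S m)) (qZ (S m)).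
Proof.
  unfold prodZ. replace (S m - 1)%nat with m by lia.
  apply rel_prime_fold_mul. intros x Hx.
  apply in_map_iff in Hx. destruct Hx as [k [<- Hk]]. apply in_seq in Hk.
  apply rel_prime_pow2_pow2_sub1_qZ. lia.
Qed.

Lemma gcd_pZ_qZ (m : nat) : Z.gcd (pZ (S m)) (qZ (S m)) = 1.
Proof.
  unfold pZ. rewrite Z.gcd_comm.
  replace (qZ (S m) - prodZ (S m)) with (- prodZ (S m) + 1 * qZ (S m)) by ring.
  rewrite Z.gcd_add_mult_diag_r, Z.gcd_opp_r, Z.gcd_comm.
  apply Zgcd_1_rel_prime, rel_prime_prodZ_qZ.
Qed.

Lemma pZ_qZ_S (m : nat) :
  pZ (S (S m)) = 2 + (2 ^ 2 ^ Z.of_nat m - 1) * pZ (S m) /\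
  qZ (S (S m)) = 2 + (2 ^ 2 ^ Z.of_nat m - 1) * qZ (S m).
Proof. unfold pZ. rewrite !qZ_S, prodZ_S, Z_pow2_pow2_S. split; ring. Qed.

Close Scope Z_scope.

Theorem mainTheorem5 :
  (forall j : nat, (1 <= j)%nat ->
     tau_j j = (IZR (pZ j) / IZR (qZ j))%R /\
     Z.gcd (pZ j) (qZ j) = 1%Z /\
     tau_j j = (1 - IZR (prodZ j) / IZR (qZ j))%R /\
     tau_j j = (1 - prodR j / (2 * (1 - / 2 ^ (2 ^ j))))%R) /\
  pZ 1 = 2%Z /\ qZ 1 = 3%Z /\
  (forall j : nat, (1 <= j)%nat ->
     pZ (S j) = (2 + (2 ^ (2 ^ Z.of_nat (j - 1)) - 1) * pZ j)%Z /\
     qZ (S j) = (2 + (2 ^ (2 ^ Z.of_nat (j - 1)) - 1) * qZ j)%Z).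
Proof.
  split; [|split; [reflexivity|split; [reflexivity|]]].
  - intros [|m] Hj; [lia|].
    split; [|split; [|split]].
    + apply tau_j_pZ.
    + apply gcd_pZ_qZ.
    + apply tau_j_prodZ.
    + apply tau_j_prodR.
  - intros [|m] Hj; [lia|].
    rewrite Nat.sub_succ, Nat.sub_0_r. apply pZ_qZ_S.
Qed.
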